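(* Suppose $\mu>1$. Then for every environment $i\in S$ there exists $m\ge1$ such that the total state $m.i$ is viable.
   Context: Let $S$ be a finite set and $P$ the transition matrix of an irreducible Markov chain on $S$ with stationary distribution $\pi$. For each $i\in S$ let $(R_{in})_{n\in\mathbb{N}}$ be a probability distribution on $\mathbb{N}$ with mean $\mu_i\le\infty$, and $\mu=\sum_i\pi_i\mu_i$. Let $(\xi_t^i)_{t\ge1,i\in S}$ be independent with $\mathbb{P}(\xi_t^i=n)=R_{in}$, let $(Q_t)_{t\ge0}$ be a Markov chain with transition matrix $P$ independent of the $\xi$'s, and $\xi_t=\sum_{i}\xi_t^i\mathbf{1}\{Q_t=i\}$. The $\mathbb{Z}$-valued process is $Y_{t+1}=Y_t-1+\xi_{t+1}$; $\mathbb{P}_{m.i}$ is its law started from $Y_0=m$, $Q_0=i$. Let $\tau=\inf\{t\ge1:Q_t=i\}$. The total state $m.i$ is viable if $\mathbb{P}_{m.i}(Y_\tau-Y_0\ge1\text{ and }Y_t\ge1\text{ for all }t\in[0,\tau])>0$. *)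

From HB Require Import structures.
From mathcomp Require Import all_boot all_order all_algebra.
From mathcomp Require Import all_classical all_reals.
From mathcomp Require Import ereal sequences esum.
Set Implicit Arguments. Unset Strict Implicit. Unset Printing Implicit Defensive.
Import Order.TTheory GRing.Theory Num.Theory.
Local Open Scope ring_scope.
Local Open Scope classical_set_scope.

Section MAP.
Variables (R : realType) (S : finType).

Definition stochastic (P : S -> S -> R) : Prop :=
  (forall i j, 0 <= P i j) /\ (forall i, \sum_(j : S) P i j = 1).

Fixpoint mpow (P : S -> S -> R) (n : nat) (i j : S) : R :=
  match n with
  | 0%N => (i == j)%:R
  | n'.+1 => \sum_(k : S) mpow P n' i k * P k j
  end.

Definition irreducible (P : S -> S -> R) : Prop :=
  forall i j : S, exists n : nat, 0 < mpow P n i j.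

Definition stationary (P : S -> S -> R) (pi : S -> R) : Prop :=
  [/\ forall i, 0 <= pi i, \sum_(i : S) pi i = 1
    & forall j, \sum_(i : S) pi i * P i j = pi j].

Definition prob_on_nat (Rd : nat -> R) : Prop :=
  (forall n, 0 <= Rd n) /\ (\sum_(n <oo) (Rd n)%:E = 1)%E.

Definition mean_nat (Rd : nat -> R) : \bar R :=
  (\sum_(n <oo) (n%:R * Rd n)%:E)%E.

Definition mu_total (pi : S -> R) (Rd : S -> nat -> R) : \bar R :=
  (\sum_(i : S) (pi i)%:E * mean_nat (Rd i))%E.

(* A finite trajectory of the process started at Q_0 = i0 is a list
   [:: (Q_1, xi_1); ...; (Q_k, xi_k)].  Its probability under P_{m.i0}
   is prod_{t=1}^k P(Q_{t-1},Q_t) * R_{Q_t}(xi_t)  (since xi_t = xi_t^{Q_t}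
   with xi_t^j independent of law R_j and independent of Q). *)
Fixpoint traj_weight (P : S -> S -> R) (Rd : S -> nat -> R) (q : S)
  (s : seq (S * nat)) : R :=
  match s with
  | [::] => 1
  | (q', x) :: s' => P q q' * Rd q' x * traj_weight P Rd q' s'
  end.

(* Y_t along the trajectory: Y_0 = m, Y_t = m + sum_{s<=t} (xi_s - 1) *)
Definition Ytraj (m : int) (s : seq (S * nat)) (t : nat) : int :=
  m + \sum_(j < t) ((nth 0%N (map snd s) j)%:Z - 1).

(* Q_t along the trajectory, for 1 <= t <= size s *)
Definition Qtraj (i0 : S) (s : seq (S * nat)) (t : nat) : S :=
  nth i0 (map fst s) t.-1.

(* The trajectory s (of length k = tau) realises the event
   {Y_tau - Y_0 >= 1 and Y_t >= 1 for all t in [0,tau]},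
   where tau = inf {t >= 1 : Q_t = i0}. *)
Definition good_traj (i0 : S) (m : int) (s : seq (S * nat)) : Prop :=
  [/\ (0 < size s)%N,
      Qtraj i0 s (size s) = i0,
      forall t, (0 < t < size s)%N -> Qtraj i0 s t != i0,
      forall t, (t <= size s)%N -> 1 <= Ytraj m s t
    & 1 <= Ytraj m s (size s) - m].

(* P_{m.i}(Y_tau - Y_0 >= 1 and Y_t >= 1 for all t in [0,tau]):
   the event is the disjoint union of the cylinders of its trajectories
   up to the stopping time tau. *)
Definition viable_prob (P : S -> S -> R) (Rd : S -> nat -> R) (m : int)
  (i : S) : \bar R :=
  (\esum_(s in [set s | good_traj i m s]) (traj_weight P Rd i s)%:E)%R.

Definition viable (P : S -> S -> R) (Rd : S -> nat -> R) (m : int) (i : S)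
  : Prop := (0 < viable_prob P Rd m i)%E.

End MAP.

From HB Require Import structures.
From mathcomp Require Import all_boot all_order all_algebra.
From mathcomp Require Import all_classical all_reals.
From mathcomp Require Import ereal sequences esum.
From mathcomp Require Import ring lra zify.
Set Implicit Arguments. Unset Strict Implicit. Unset Printing Implicit Defensive.
Import Order.TTheory GRing.Theory Num.Theory.
Local Open Scope ring_scope.

(* Since mu > 1, one can pick in the support of each R_j a value x_j with
   sum_j pi_j (x_j - 1) > 0 (the largest point of a bounded support dominates
   its mean; an unbounded support has arbitrarily large points).  For
   w_j := x_j - 1, some first-return loop of the chain at i has positive
   total w-weight: otherwise h k := sup of the w-weights of the paths from k
   that first hit i at their end is a finite potential with
   w_j <= h_j - h_k along every edge, and integrating this against the
   stationary flow pi_j P_jk gives sum_j pi_j w_j <= 0.  Following that loop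
   with xi_t = x_(Q_t) has positive probability and raises Y by at least 1;
   started from m = length + 1, Y stays >= 1 because it drops by at most 1
   per step. *)

Section TabooPaths.
Variables (T : eqType) (e : rel T) (i : T).

(* [k :: rcons t i] is an [e]-path hitting [i] only at its end; for [k = i]
   it is a first-return loop. *)
Definition taboo_path (k : T) (t : seq T) : bool :=
  (i \notin t) && path e k (rcons t i).

Lemma taboo_path_of_visit k s : path e k s -> i \in s -> exists t, taboo_path k t.
Proof.
elim: s k => [|a s IHs] k //= /andP[eka pas].
rewrite in_cons; case: eqVneq => [ia _|ia /= ias].
  by exists [::]; rewrite /taboo_path /= ia eka.
have [t /andP[it pat]] := IHs a pas ias.
by exists (a :: t); rewrite /taboo_path in_cons negb_or ia it /= eka.
Qed.

Lemma last_visit_suffix a s : path e a s -> (a == i) || (i \in s) ->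
  exists2 p, (i \notin p) && path e i p & last i p = last a s.
Proof.
elim: s a => [|b s IHs] a /=; first by rewrite orbF => _ /eqP ->; exists [::].
move=> /andP[eab pbs]; rewrite in_cons.
case: (eqVneq b i) => [bi|bi]; first by move=> _; apply: IHs; rewrite // bi eqxx.
case: (boolP (i \in s)) => [is_|is_]; first by move=> _; apply: IHs; rewrite // is_ orbT.
rewrite !orbF => /eqP ai.
by exists (b :: s); rewrite // in_cons eq_sym (negbTE bi) (negbTE is_) /= -ai eab.
Qed.

End TabooPaths.

Section MarkovChain.
Variables (R : realType) (S : finType) (P : S -> S -> R).
Hypothesis P_stoch : stochastic P.

Definition edge : rel S := fun a b => 0 < P a b.

Lemma mpow_ge0 n a b : 0 <= mpow P n a b.
Proof.
elim: n b => [|n IHn] b /=; first exact: ler0n.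
by apply: sumr_ge0 => k _; apply: mulr_ge0 => //; apply: P_stoch.1.
Qed.

Lemma connect_mpow n a b : 0 < mpow P n a b -> connect edge a b.
Proof.
elim: n b => [|n IHn] b /=; first by case: eqVneq => [->|]; rewrite ?ltxx.
have step_ge0 k : 0 <= mpow P n a k * P k b.
  by apply: mulr_ge0; [apply: mpow_ge0 | apply: P_stoch.1].
rewrite lt0r psumr_neq0 // => /andP[/hasP[k _ /andP[_]]] + _.
rewrite mulr_ge0_gt0 ?mpow_ge0 ?P_stoch.1 // => /andP[/IHn ak kb].
by apply: connect_trans ak (connect1 kb).
Qed.

Lemma edge_out a : exists b, edge a b.
Proof.
have : 0 < \sum_b P a b by rewrite P_stoch.2 ltr01.
rewrite lt0r psumr_neq0 => [/andP[/hasP[b _ /andP[_ ab]] _]|b _]; last exact: P_stoch.1.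
by exists b.
Qed.

Lemma stationary_potential_le0 (pi w h : S -> R) : stationary P pi ->
  (forall j k, edge j k -> w j <= h j - h k) -> \sum_j pi j * w j <= 0.
Proof.
move=> [pi_ge0 _ pi_inv] w_le.
have -> : \sum_j pi j * w j = \sum_j \sum_k pi j * P j k * w j.
  apply: eq_bigr => j _; rewrite -mulr_suml -mulr_sumr P_stoch.2; ring.
have flow0 : \sum_j \sum_k pi j * P j k * (h j - h k) = 0.
  under eq_bigr do under eq_bigr do rewrite mulrBr.
  under eq_bigr do rewrite sumrB.
  rewrite sumrB; under eq_bigr do rewrite -mulr_suml -mulr_sumr P_stoch.2 mulr1.
  rewrite exchange_big /=; under [X in _ - X]eq_bigr do rewrite -mulr_suml pi_inv.
  by rewrite subrr.
rewrite -[leRHS]flow0; apply: ler_sum => j _; apply: ler_sum => k _.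
have [jk|njk] := boolP (edge j k).
  by apply: ler_wpM2l (w_le _ _ jk); apply: mulr_ge0 => //; apply: P_stoch.1.
have -> : P j k = 0 by apply/eqP; rewrite eq_le P_stoch.1 andbT leNgt.
by rewrite mulr0 !mul0r.
Qed.

Hypothesis P_irr : irreducible P.
Variable i : S.

Lemma taboo_path_exists k : exists t, taboo_path edge i k t.
Proof.
have [l kl] := edge_out k; have [n /connect_mpow/connectP[s ls li]] := P_irr l i.
by apply: (@taboo_path_of_visit _ _ _ _ (l :: s)); rewrite /= ?kl // li mem_last.
Qed.

Lemma taboo_prefix_exists k :
  exists2 p, (i \notin p) && path edge i p & last i p = k.
Proof.
have [n /connect_mpow/connectP[s ps ->]] := P_irr i k.
by apply: last_visit_suffix; rewrite ?eqxx.
Qed.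

Section Potential.
Variable w : S -> R.
Hypothesis returns_le0 :
  forall t, taboo_path edge i i t -> \sum_(q <- i :: t) w q <= 0.

Local Open Scope classical_set_scope.

Let taboo_weights k :=
  [set \sum_(q <- k :: t) w q | t in [set t | taboo_path edge i k t]].

Lemma taboo_weights_neq0 k : taboo_weights k !=set0.
Proof. by have [t tk] := taboo_path_exists k; exists (\sum_(q <- k :: t) w q), t. Qed.

Lemma taboo_weights_ub k : has_ubound (taboo_weights k).
Proof.
have [p /andP[ip pp] pk] := taboo_prefix_exists k.
exists (w k - \sum_(q <- i :: p) w q) => _ [t /andP[it pt] <-].
have : \sum_(q <- i :: p ++ t) w q <= 0.
  by apply: returns_le0; rewrite /taboo_path mem_cat negb_or ip it rcons_cat cat_path pp pk.
by rewrite -cat_cons big_cat /= !big_cons; lra.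
Qed.

Let h k := if k == i then 0 else sup (taboo_weights k).

Lemma sup_taboo_weights_le j : sup (taboo_weights j) <= h j.
Proof.
rewrite /h; case: eqP => [->|//].
by apply: ge_sup => [|_ [t tp <-]]; [apply: taboo_weights_neq0 | apply: returns_le0].
Qed.

Lemma edge_taboo_weights j k : edge j k -> w j + h k <= sup (taboo_weights j).
Proof.
move=> jk; rewrite /h; case: eqVneq => [ki|ki].
  rewrite addr0; apply: ub_le_sup (taboo_weights_ub j) _ _.
  by exists [::]; rewrite ?big_seq1 // /taboo_path /= -ki jk.
rewrite addrC -lerBrDr; apply: ge_sup (taboo_weights_neq0 k) _ => _ [t /andP[it pt] <-].
rewrite lerBrDr addrC; apply: ub_le_sup (taboo_weights_ub j) _ _.
by exists (k :: t); rewrite ?big_cons //= /taboo_path in_cons negb_or eq_sym ki it /= jk.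
Qed.

Lemma potential_of_returns_le0 :
  exists h : S -> R, forall j k, edge j k -> w j <= h j - h k.
Proof.
by exists h => j k jk; have := edge_taboo_weights jk; have := sup_taboo_weights_le j; lra.
Qed.

End Potential.

Lemma positive_return (pi w : S -> R) : stationary P pi ->
  0 < \sum_j pi j * w j ->
  exists t, taboo_path edge i i t && (0 < \sum_(q <- i :: t) w q).
Proof.
move=> pi_stat w_pos; apply: contrapT => no_pos.
have [|h h_pot] := @potential_of_returns_le0 w.
  by move=> t tp; rewrite leNgt; apply/negP => t_pos; apply: no_pos; exists t; rewrite tp.
by have := stationary_potential_le0 pi_stat h_pot; rewrite leNgt w_pos.
Qed.

End MarkovChain.

Section DistributionOnNat.
Variables (R : realType) (d : nat -> R).
Hypothesis d_prob : prob_on_nat d.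

Lemma prob_on_nat_supp : exists n, 0 < d n.
Proof.
apply: contrapT => no_supp; have [d_ge0 d_sum1] := d_prob.
have d0 n : d n = 0.
  by apply/eqP; rewrite eq_le d_ge0 andbT leNgt; apply/negP => dn; apply: no_supp; exists n.
suff : (\sum_(n <oo) (d n)%:E = 0)%E by rewrite d_sum1 => /eqP; rewrite eqe oner_eq0.
by apply: eseries0 => n _ _; rewrite d0.
Qed.

Lemma mean_nat_le_supp_bound M :
  (forall n, 0 < d n -> (n <= M)%N) -> (mean_nat d <= M%:R%:E)%E.
Proof.
move=> supp_le; have [d_ge0 d_sum1] := d_prob.
apply: (@le_trans _ _ (\sum_(n <oo) ((M%:R : R)%:E * (d n)%:E))%E).
  apply: lee_nneseries => [n _ _|n _]; first by rewrite lee_fin mulr_ge0.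
  rewrite -EFinM lee_fin; have [dn|] := boolP (0 < d n).
    by rewrite ler_wpM2r ?(ltW dn) // ler_nat supp_le.
  rewrite -leNgt => dn_le0; have -> : d n = 0 by apply/eqP; rewrite eq_le dn_le0 d_ge0.
  by rewrite !mulr0.
by rewrite nneseriesZl => [|n _]; rewrite ?d_sum1 ?mule1 ?lee_fin.
Qed.

Lemma supp_large_or_ge_mean N :
  exists n, 0 < d n /\ ((N <= n)%N \/ (mean_nat d <= n%:R%:E)%E).
Proof.
have [[n /andP[dn Nn]]|no_large] := pselect (exists n, (0 < d n) && (N <= n)%N).
  by exists n; split; [|left].
have supp_le n : 0 < d n -> (n <= N)%N.
  by move=> dn; rewrite leqNgt; apply/negP => /ltnW Nn; apply: no_large; exists n; rewrite dn.
case: (ex_maxnP prob_on_nat_supp supp_le) => n dn n_max.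
by exists n; split; last by right; apply: mean_nat_le_supp_bound n_max.
Qed.

End DistributionOnNat.

Lemma exists_supp_mean_gt1 (R : realType) (S : finType) (pi : S -> R)
    (Rd : S -> nat -> R) :
  (forall j, 0 <= pi j) -> (forall j, prob_on_nat (Rd j)) ->
  (1 < mu_total pi Rd)%E ->
  exists2 x : S -> nat, forall j, 0 < Rd j (x j) & 1 < \sum_j pi j * (x j)%:R.
Proof.
move=> pi_ge0 Rd_prob mu_gt1.
(* [N] exceeds every [(pi j)^-1], so one support point [>= N] at a state of
   positive weight already makes the sum exceed 1. *)
pose N := (\max_j Num.truncn (pi j)^-1).+1.
have [x x_spec] := choice (fun j => supp_large_or_ge_mean (Rd_prob j) N).
exists x => [j|]; first by case: (x_spec j).
have [[j /andP[pj Nx]]|no_large] := pselect (exists j, (0 < pi j) && (N <= x j)%N).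
  have pjx_gt1 : 1 < pi j * (x j)%:R.
    have : (pi j)^-1 < (x j)%:R.
      rewrite -truncn_lt_nat ?invr_ge0 //; apply: leq_trans Nx.
      by rewrite ltnS (leq_bigmax j).
    by rewrite -ltr_pdivrMl // mulr1.
  rewrite (bigD1 j) //=; apply: (lt_le_trans pjx_gt1).
  by rewrite lerDl sumr_ge0 // => k _; rewrite mulr_ge0.
rewrite -lte_fin; apply: (lt_le_trans mu_gt1).
rewrite /mu_total -sumEFin; apply: lee_sum => j _.
have := pi_ge0 j; rewrite le0r => /orP[/eqP->|pj]; first by rewrite mul0e mul0r.
case: (x_spec j) => _ [Nx|mean_le]; first by case: no_large; exists j; rewrite pj Nx.
by rewrite EFinM lee_wpmul2l // lee_fin ltW.
Qed.

Section Trajectories.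
Variables (R : realType) (S : finType) (P : S -> S -> R) (Rd : S -> nat -> R).

Lemma traj_weight_gt0 (x : S -> nat) a r :
  (forall q, 0 < Rd q (x q)) -> path (edge P) a r ->
  0 < traj_weight P Rd a [seq (q, x q) | q <- r].
Proof.
move=> x_supp; elim: r a => [|b r IHr] a /= => [_|/andP[ab br]]; first exact: ltr01.
by rewrite !mulr_gt0 ?IHr.
Qed.

Lemma Ytraj_ge (m : int) (s : seq (S * nat)) t : m - t%:Z <= Ytraj m s t.
Proof.
rewrite /Ytraj lerD2l.
have -> : - t%:Z = \sum_(j < t) (-1 : int) by rewrite sumr_const card_ord mulNrn natz.
by apply: ler_sum => j _; lia.
Qed.

Lemma Ytraj_size (m : int) (s : seq (S * nat)) :
  Ytraj m s (size s) - m = \sum_(q <- s) (q.2%:Z - 1).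
Proof.
rewrite /Ytraj addrAC subrr add0r -(big_map snd xpredT (fun v => v%:Z - 1)).
by rewrite (big_nth 0%N) big_mkord size_map.
Qed.

Lemma viable_of_good_traj i m s :
  good_traj i m s -> 0 < traj_weight P Rd i s -> viable P Rd m i.
Proof.
move=> s_good s_pos; rewrite /viable /viable_prob.
apply: (@lt_le_trans _ _ (traj_weight P Rd i s)%:E); first by rewrite lte_fin.
apply: esum_ge; exists [set s]%classic; last by rewrite fsbig_set1.
by split; [apply: finite_set1 | move=> _ ->].
Qed.

End Trajectories.

Lemma good_traj_cycle (S : finType) (i : S) (x : S -> nat) t :
  i \notin t -> 0 < \sum_(q <- rcons t i) ((x q)%:Z - 1) ->
  good_traj i (size t).+2%:Z [seq (q, x q) | q <- rcons t i].
Proof.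
move=> it cycle_gain; set s := map _ _.
have s_size : size s = (size t).+1 by rewrite size_map size_rcons.
have fst_s : map fst s = rcons t i by rewrite -map_comp; apply: map_id.
split.
- by rewrite s_size.
- by rewrite /Qtraj fst_s s_size nth_rcons ltnn eqxx.
- move=> k /andP[k_gt0 k_lt]; rewrite /Qtraj fst_s nth_rcons.
  have -> : (k.-1 < size t)%N by rewrite s_size in k_lt; lia.
  by apply: contraNneq it => <-; apply: mem_nth; rewrite s_size in k_lt; lia.
- by move=> k k_le; have := Ytraj_ge (size t).+2%:Z s k; rewrite s_size in k_le; lia.
- by rewrite Ytraj_size big_map -gtz0_ge1.
Qed.

Theorem mainTheorem4 (R : realType) (S : finType)
  (P : S -> S -> R) (pi : S -> R) (Rd : S -> nat -> R) :
  stochastic P -> irreducible P -> stationary P pi ->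
  (forall i, prob_on_nat (Rd i)) ->
  (1 < mu_total pi Rd)%E ->
  forall i : S, exists m : int, 1 <= m /\ viable P Rd m i.
Proof.
move=> P_stoch P_irr pi_stat Rd_prob mu_gt1 i.
have [pi_ge0 pi_sum1 _] := pi_stat.
have [x x_supp x_mean] := exists_supp_mean_gt1 pi_ge0 Rd_prob mu_gt1.
pose w j : R := ((x j)%:Z - 1)%:~R.
have w_drift : 0 < \sum_j pi j * w j.
  rewrite (eq_bigr (fun j => pi j * (x j)%:R - pi j)) => [|j _]; last first.
    by rewrite /w intrB mulrBr mulr1.
  by rewrite sumrB pi_sum1 subr_gt0.
have [t /andP[/andP[it t_path] t_gain]] := positive_return P_stoch P_irr i pi_stat w_drift.
exists (size t).+2%:Z; split => //.
apply: viable_of_good_traj; last exact: traj_weight_gt0 x_supp t_path.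
apply: good_traj_cycle it _.
rewrite (perm_big (i :: t)) ?perm_rcons //.
by rewrite -(ltr0z R) rmorph_sum.
Qed.
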